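(* Let $G$ be a graph, let $A,B\subseteq V(G)$ be disjoint independent sets in $G$ each of size at least two, and let $v\in V(G)\setminus(A\cup B)$. Assume that every $a\in A$ has at least one neighbour and at least one non-neighbour in $B$, and every $b\in B$ has at least one neighbour and at least one non-neighbour in $A$. Then one can admissibly remove from $G$ a subset of $A\cup B\cup\{v\}$ which contains $v$ and contains at most two vertices of $A$ and at most two vertices of $B$.
   Context: Removing a set $T$ of vertices from a graph $G$ is a simple admissible removal if $T$ is an independent set in $G$ and the number of edges between $T$ and $V(G)\setminus T$ is even. Removing a (not necessarily independent) set of vertices is admissible if it can be realised by a sequence of simple admissible removals, each performed in the graph remaining after the previous ones. Degrees are always taken in the current remaining graph. *)

From mathcomp Require Import all_boot.
Set Implicit Arguments. Unset Strict Implicit. Unset Printing Implicit Defensive.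

(* The "current
   remaining graph" is the induced subgraph on a vertex set R : {set V}. *)

Definition independent (V : finType) (e : rel V) (T : {set V}) : Prop :=
  forall x y, x \in T -> y \in T -> ~~ e x y.

(* number of edges between T and U (T, U disjoint: each edge counted once) *)
Definition n_edges_between (V : finType) (e : rel V) (T U : {set V}) : nat :=
  #|[set p : V * V | [&& p.1 \in T, p.2 \in U & e p.1 p.2]]|.

Definition simple_admissible (V : finType) (e : rel V) (R T : {set V}) : Prop :=
  [/\ T \subset R, independent e T & ~~ odd (n_edges_between e T (R :\: T))].

Inductive admissible (V : finType) (e : rel V) : {set V} -> {set V} -> Prop :=
| adm_nil : forall R, admissible e R set0
| adm_step : forall R T S, simple_admissible e R T ->
    admissible e (R :\: T) S -> admissible e R (T :|: S).

From mathcomp Require Import all_boot.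
Set Implicit Arguments. Unset Strict Implicit. Unset Printing Implicit Defensive.

(* Only parities of degrees matter: removing one vertex of even degree, or two
   non-adjacent vertices of equal degree parity, is simple admissible, and it
   flips the degree parity of exactly the neighbours of the removed vertices.
   If [v] has even degree, remove it alone.  Otherwise call [x] in [A :|: B]
   matched if [deg x] is odd exactly when [x] is adjacent to [v].  An unmatched
   [x] is removed together with [v] (both odd, non-adjacent) or just before [v]
   (even, and then [deg v] becomes even).  If everything is matched but some [x]
   is not adjacent to [v], then [deg x] is even; removing [x] flips the parity of
   its neighbour [y] in [A :|: B] but not of [v], after which [y] and [v] are
   removed in turn or together.  Finally, if [v] is adjacent to all of [A :|: B],
   all these vertices have odd degree: take [a] in [A], a non-neighbour [b] in
   [B] of [a] and a neighbour [a'] in [A] of [b], and remove [{a, b}], then [a']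
   (which lost [b]), then [v] (which lost [a], [b], [a']). *)

Section DegreeParity.
Variables (V : finType) (e : rel V).

Definition deg (R : {set V}) (x : V) : nat := #|[set y in R | e x y]|.

Lemma n_edges_between_sum (T U : {set V}) :
  n_edges_between e T U = \sum_(t in T) deg U t.
Proof.
rewrite /n_edges_between -sum1_card.
transitivity (\sum_(t in T) \sum_(u in U) (e t u : nat)); last first.
  apply: eq_bigr => t _; rewrite /deg -sum1_card big_mkcond [RHS]big_mkcond /=.
  by apply: eq_bigr => u _; rewrite inE; case: (u \in U); case: (e t u).
rewrite pair_big big_mkcond [RHS]big_mkcond /=.
by apply: eq_bigr => -[x y] _; rewrite inE /=; case: (x \in T); case: (y \in U); case: (e x y).
Qed.

Lemma deg_setD1 (R : {set V}) x y : x \in R -> deg R y = deg (R :\ x) y + e y x.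
Proof.
move=> xR; rewrite /deg (cardsD1 x [set z in R | e y z]) addnC inE xR /=.
by congr (_ + _); apply: eq_card => z; rewrite !inE andbA.
Qed.

Lemma odd_deg_setD1 (R : {set V}) x y :
  x \in R -> odd (deg (R :\ x) y) = odd (deg R y) (+) e y x.
Proof. by move=> xR; rewrite (deg_setD1 y xR) oddD oddb addbK. Qed.

Hypotheses (e_sym : symmetric e) (e_irr : irreflexive e).

Lemma edge_neq x y : e x y -> x != y.
Proof. by apply: contraTneq => ->; rewrite e_irr. Qed.

Lemma simple_admissible1 (R : {set V}) x :
  x \in R -> ~~ odd (deg R x) -> simple_admissible e R [set x].
Proof.
move=> xR even_x; split; first by rewrite sub1set.
  by move=> y z /set1P-> /set1P->; rewrite e_irr.
by rewrite n_edges_between_sum big_set1; move: even_x; rewrite (deg_setD1 x xR) e_irr addn0.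
Qed.

Lemma simple_admissible2 (R : {set V}) x y :
  x \in R -> y \in R -> x != y -> ~~ e x y -> odd (deg R x) = odd (deg R y) ->
  simple_admissible e R [set x; y].
Proof.
move=> xR yR xy nexy same_parity; split.
- by rewrite subUset !sub1set xR yR.
- by move=> z t /set2P[]-> /set2P[]->; rewrite ?e_irr ?(negbTE nexy) // e_sym (negbTE nexy).
have yRx : y \in R :\ x by rewrite !inE eq_sym xy.
have deg_rest z : z \in [set x; y] -> deg R z = deg (R :\: [set x; y]) z.
  have neyx : e y x = false by rewrite e_sym (negbTE nexy).
  move=> /set2P[]->; rewrite -setDDl (deg_setD1 _ xR) (deg_setD1 _ yRx);
    by rewrite e_irr ?(negbTE nexy) ?neyx !addn0.
rewrite n_edges_between_sum big_setU1 ?inE //= big_set1.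
by rewrite -!deg_rest ?set21 ?set22 // oddD same_parity addbb.
Qed.

Lemma admissible_simple (R T : {set V}) :
  simple_admissible e R T -> admissible e R T.
Proof. by move=> simT; rewrite -[T]setU0; apply: adm_step simT (adm_nil _ _). Qed.

Lemma admissible_cons (R S : {set V}) x :
  x \in R -> ~~ odd (deg R x) -> admissible e (R :\ x) S -> admissible e R (x |: S).
Proof. by move=> xR even_x; apply: adm_step; apply: simple_admissible1. Qed.

Section OddVertex.
Variables (R : {set V}) (v : V).
Hypotheses (vR : v \in R) (odd_v : odd (deg R v)).

Lemma admissible_parity_mismatch x :
  x \in R -> x != v -> odd (deg R x) != e v x -> admissible e R [set x; v].
Proof.
move=> xR xv; case: (boolP (e v x)) => [evx | nevx] mismatch.
  apply: admissible_cons => //; first by move: mismatch; case: (odd _).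
  apply: admissible_simple; apply: simple_admissible1; first by rewrite !inE eq_sym xv.
  by rewrite odd_deg_setD1 // odd_v evx.
apply: admissible_simple; apply: simple_admissible2 => //; first by rewrite e_sym.
by rewrite odd_v; move: mismatch; case: (odd _).
Qed.

Lemma admissible_through_nonneighbour x y :
  x \in R -> y \in R -> x != v -> y != v -> ~~ e v x -> e x y ->
  ~~ odd (deg R x) -> odd (deg R y) = e v y -> admissible e R (x |: [set y; v]).
Proof.
move=> xR yR xv yv nevx exy even_x parity_y.
have yRx : y \in R :\ x by rewrite !inE yR andbT; apply: contraTneq exy => ->; rewrite e_irr.
have vRx : v \in R :\ x by rewrite !inE eq_sym xv.
have odd_vx : odd (deg (R :\ x) v) by rewrite odd_deg_setD1 // odd_v (negbTE nevx).
apply: admissible_cons => //.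
have parity_yx : odd (deg (R :\ x) y) = ~~ e v y.
  by rewrite odd_deg_setD1 // parity_y (e_sym y x) exy addbT.
case: (boolP (e v y)) => evy.
  apply: admissible_cons; rewrite ?parity_yx ?evy //.
  apply: admissible_simple; apply: simple_admissible1; first by rewrite in_setD1 vRx andbT eq_sym.
  by rewrite odd_deg_setD1 // odd_vx evy.
apply: admissible_simple; apply: simple_admissible2 => //; first by rewrite e_sym.
by rewrite parity_yx evy odd_vx.
Qed.

Lemma admissible_all_adjacent a b a' :
  a \in R -> b \in R -> a' \in R -> a != b -> ~~ e a b -> e b a' -> ~~ e a' a ->
  e v a -> e v b -> e v a' ->
  odd (deg R a) -> odd (deg R b) -> odd (deg R a') ->
  admissible e R ([set a; b] :|: [set a'; v]).
Proof.
move=> aR bR a'R ab neab eba' nea'a eva evb eva' odd_a odd_b odd_a'.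
have a'a : a' != a by apply: contraTneq eba' => ->; rewrite e_sym.
have bRa : b \in R :\ a by rewrite in_setD1 bR andbT eq_sym.
have a'Rab : a' \in R :\ a :\ b by rewrite !in_setD1 a'R a'a eq_sym edge_neq.
have vRab : v \in R :\ a :\ b by rewrite !in_setD1 vR !edge_neq.
apply: adm_step; first by apply: simple_admissible2; rewrite ?odd_a.
rewrite -setDDl; apply: admissible_cons => //.
  by rewrite !odd_deg_setD1 // odd_a' (negbTE nea'a) e_sym eba'.
apply: admissible_simple; apply: simple_admissible1.
  by rewrite in_setD1 vRab edge_neq.
by rewrite !odd_deg_setD1 // odd_v eva evb eva'.
Qed.

End OddVertex.

Section TwoIndependentSets.
Variables (A B : {set V}) (v : V).
Hypotheses (disjAB : [disjoint A & B]) (indepA : independent e A).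
Hypotheses (A_gt1 : 1 < #|A|) (vAB : v \notin A :|: B).
Hypothesis A_nbrs :
  forall a, a \in A -> (exists2 b, b \in B & e a b) /\ (exists2 b, b \in B & ~~ e a b).
Hypothesis B_nbrs :
  forall b, b \in B -> (exists2 a, a \in A & e b a) /\ (exists2 a, a \in A & ~~ e b a).

Let small_subset (X : {set V}) :=
  [/\ X \subset A :|: B, #|X :&: A| <= 2 & #|X :&: B| <= 2].

Lemma small_subset_card2 (X : {set V}) :
  X \subset A :|: B -> #|X| <= 2 -> small_subset X.
Proof.
move=> subX cardX; split=> //; apply: leq_trans cardX; exact/subset_leq_card/subsetIl.
Qed.

Lemma small_subset_setU (P Q : {set V}) :
  P \subset A -> Q \subset B -> #|P| <= 2 -> #|Q| <= 2 -> small_subset (P :|: Q).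
Proof.
move=> PA QB cardP cardQ.
have disjQA : [disjoint Q & A] by rewrite disjoint_sym (disjointWr QB disjAB).
have disjPB : [disjoint P & B] := disjointWl PA disjAB.
split; first exact: setUSS.
  by rewrite setIUl (setIidPl PA) (disjoint_setI0 disjQA) setU0.
by rewrite setIUl (setIidPl QB) (disjoint_setI0 disjPB) set0U.
Qed.

Section OddCentre.
Hypothesis odd_v : odd (deg [set: V] v).

Lemma small_admissible_all_adjacent :
  {in A :|: B, forall z, e v z && odd (deg [set: V] z)} ->
  exists2 X, small_subset X & admissible e [set: V] (v |: X).
Proof.
move=> all_adjacent.
have [a aA] : exists a, a \in A by apply/card_gt0P; apply: ltnW.
have [_ [b bB neab]] := A_nbrs aA.
have [[a' a'A eba'] _] := B_nbrs bB.
have ab : a != b by apply: contraTneq aA => ->; rewrite (disjointFl disjAB bB).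
have /andP[eva odd_a] : e v a && odd (deg [set: V] a) by rewrite all_adjacent ?inE ?aA.
have /andP[evb odd_b] : e v b && odd (deg [set: V] b) by rewrite all_adjacent ?inE ?bB ?orbT.
have /andP[eva' odd_a'] : e v a' && odd (deg [set: V] a') by rewrite all_adjacent ?inE ?a'A.
exists ([set a; a'] :|: [set b]).
  apply: small_subset_setU; rewrite ?subUset ?sub1set ?aA ?a'A ?bB ?cards1 // cards2.
  by case: (_ != _).
have -> : v |: ([set a; a'] :|: [set b]) = [set a; b] :|: [set a'; v].
  by apply/setP=> z; rewrite !inE; do !case: (_ == _).
by apply: admissible_all_adjacent; rewrite ?in_setT // indepA.
Qed.

Lemma small_admissible_odd :
  exists2 X, small_subset X & admissible e [set: V] (v |: X).
Proof.
have vT := in_setT v.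
have vne x : x \in A :|: B -> x != v by apply: contraTneq => ->.
have [x /andP[xAB mismatch] | matched] :=
  pickP [pred x in A :|: B | odd (deg [set: V] x) != e v x].
  exists [set x]; first by apply: small_subset_card2; rewrite ?sub1set ?cards1.
  by rewrite setUC; apply: (admissible_parity_mismatch vT odd_v); rewrite ?in_setT ?vne.
have {}matched x : x \in A :|: B -> odd (deg [set: V] x) = e v x.
  by move=> xAB; apply/eqP; move: (matched x); rewrite /= xAB => /negbFE.
have [x /andP[xAB nevx] | adjacent] := pickP [pred x in A :|: B | ~~ e v x].
  have [y yAB exy] : exists2 y, y \in A :|: B & e x y.
    case/setUP: xAB => [/A_nbrs[[y yB]] | /B_nbrs[[y yA]]] exy _;
      by exists y; rewrite // inE ?yA ?yB ?orbT.
  exists [set x; y].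
    by apply: small_subset_card2; rewrite ?cards2 ?subUset ?sub1set ?xAB ?yAB //; case: (_ != _).
  rewrite setUCA [v |: _]setUC; apply: (admissible_through_nonneighbour vT odd_v);
    by rewrite ?in_setT ?vne ?matched.
apply: small_admissible_all_adjacent => z zAB.
by move: (adjacent z); rewrite /= zAB matched // => /negbFE ->.
Qed.

End OddCentre.

Lemma exists_small_admissible :
  exists2 X, small_subset X & admissible e [set: V] (v |: X).
Proof.
have [odd_v | even_v] := boolP (odd (deg [set: V] v)); first exact: small_admissible_odd.
exists set0; first by apply: small_subset_card2; rewrite ?sub0set ?cards0.
by rewrite setU0; apply: admissible_simple; apply: simple_admissible1.
Qed.

End TwoIndependentSets.

End DegreeParity.

Lemma setU1I_notin (T : finType) (x : T) (X A : {set T}) :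
  x \notin A -> (x |: X) :&: A = X :&: A.
Proof. by move=> xA; rewrite setIUl disjoint_setI0 ?set0U // disjoints1. Qed.

Theorem mainTheorem7 (V : finType) (e : rel V)
  (e_sym : symmetric e) (e_irr : irreflexive e)
  (A B : {set V}) (v : V) :
  [disjoint A & B] ->
  independent e A -> independent e B ->
  1 < #|A| -> 1 < #|B| ->
  v \notin A :|: B ->
  (forall a, a \in A -> (exists2 b, b \in B & e a b) /\ (exists2 b, b \in B & ~~ e a b)) ->
  (forall b, b \in B -> (exists2 a, a \in A & e b a) /\ (exists2 a, a \in A & ~~ e b a)) ->
  exists S : {set V},
    [/\ S \subset A :|: B :|: [set v], v \in S,
        #|S :&: A| <= 2, #|S :&: B| <= 2 & admissible e [set: V] S].
Proof.
move=> disjAB indepA _ A_gt1 _ vAB A_nbrs B_nbrs.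
have [X [subX cardXA cardXB] admX] :=
  exists_small_admissible e_sym e_irr disjAB indepA A_gt1 vAB A_nbrs B_nbrs.
have [vA vB] : v \notin A /\ v \notin B by apply/norP; rewrite -in_setU.
exists (v |: X); split=> //; first by rewrite setUC setSU.
- exact: setU11.
- by rewrite setU1I_notin.
- by rewrite setU1I_notin.
Qed.
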